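(* Consider DODA in the multi-agent setting of the context. Let the maximum delay be bounded by $\tau$, assume that for every agent $i$ and time $t$, $\mathcal S_t\subset\mathcal R^i_t$, and that the feedback of time step $t$ is the whole vector field $V_t=\nabla f_t$, which can be evaluated anywhere without delay. Suppose each $V_t$ is $L$-Lipschitz and that $\|V_t(x)\|\le G$, $\|\tilde V_t(x)\|\le G$ for all $t$ and $x$, where $\tilde V_t=V_s$ for some $s\in\mathcal S_t$. Let $D_t=\sum_{s\in\mathcal S_t}\|V_s(x_s)-\tilde V_s(x_s)\|^2$. Then for any $p$ with $\|p-x_1\|\le r$, running DODA with $\tilde g_{t+1/2}=\tilde V_t(x_t)$, \[\gamma_t=\min\Big(\frac{r\sqrt{4\tau+1}}{2\sqrt{D_t+4G^2(\tau+1)}},\ \frac{1}{\sqrt2L}\Big),\qquad \eta_t=\min\Big(\frac{r}{2\sqrt{(4\tau+1)(D_t+4G^2(3\tau+1))}},\ \frac{1}{\sqrt2L(4\tau+1)}\Big)\] guarantees \[R_T(p)\le\max\Big(\sqrt2r^2L(4\tau+1),\ 2r\sqrt{(4\tau+1)\big(V_T+4G^2(3\tau+1)\big)}\Big),\] where $V_T=\sum_{t=1}^T\|V_t(x_t)-\tilde V_t(x_t)\|^2$.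
   Context: Unconstrained Euclidean setting: $\mathcal V$ finite-dimensional Euclidean space; losses $f_t$ convex and differentiable. Several agents; at each round $t=1,\dots,T$ one agent $i(t)$ is active. $\mathcal S^i_t\subset\{1,\dots,t-1\}$: timestamps of feedback available to agent $i$ at time $t$, nondecreasing in $t$; $\mathcal S_t=\mathcal S^{i(t)}_t$. DODA: given $x_1$, $x_t=x_1-\eta_t\sum_{s\in\mathcal S_t}g_{s+1/2}$, $x_{t+1/2}=x_t-\gamma_t\tilde g_{t+1/2}$; the active agent plays $x_{t+1/2}$, and $g_{t+1/2}=V_t(x_{t+1/2})$. Regret: $R_T(p)=\sum_{t=1}^Tf_t(x_{t+1/2})-\sum_{t=1}^Tf_t(p)$. Maximum delay bounded by $\tau$: $\{1,\dots,t-\tau-1\}\subset\mathcal S_t$. Per-agent arrival order: for each agent $i$, $\sigma_i$ is a permutation of $\{1,\dots,T\}$ listing the order in which agent $i$ receives the feedback of time steps $1,\dots,T$, consistent with availability ($\mathcal S^i_t=\{\sigma_i(1),\dots,\sigma_i(|\mathcal S^i_t|)\}$); $\mathcal R^i_t=\{\sigma_i(1),\dots,\sigma_i(\sigma_i^{-1}(t)-1)\}$ is the set of timestamps of feedback received by $i$ before that of time $t$. *)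

From HB Require Import structures.
From mathcomp Require Import all_boot all_order all_algebra.
From mathcomp Require Import all_classical all_reals all_analysis.
Set Implicit Arguments. Unset Strict Implicit. Unset Printing Implicit Defensive.
Import Order.TTheory GRing.Theory Num.Theory.
Import numFieldNormedType.Exports.
Local Open Scope ring_scope.

Section Defs.
Variables (R : realType) (n : nat).

Definition dotv (u v : 'rV[R]_n) : R := \sum_(i < n) u 0 i * v 0 i.
Definition enorm (u : 'rV[R]_n) : R := Num.sqrt (dotv u u).

Definition convex_fun (f : 'rV[R]_n -> R) : Prop :=
  forall (x y : 'rV[R]_n) (l : R), 0 <= l <= 1 ->
    f (l *: x + (1 - l) *: y) <= l * f x + (1 - l) * f y.

Definition is_gradient (f : 'rV[R]_n -> R) (V : 'rV[R]_n -> 'rV[R]_n) : Prop :=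
  forall x, differentiable f x /\ forall h, 'd f x h = dotv (V x) h.

End Defs.

(* R^i_t : s is received by agent a before the feedback of time t,
   i.e. sigma_a^{-1}(s) < sigma_a^{-1}(t) (sigma_a a permutation of {1..T}). *)
Definition arrived_before (A : Type) (T : nat) (sigma : A -> nat -> nat)
  (a : A) (s t : nat) : Prop :=
  exists k j, (1 <= k)%N /\ (k < j)%N /\ (j <= T)%N /\ sigma a k = s /\ sigma a j = t.

(* Convexity bounds the regret by the linearized regret sum_t <g_t, x_{t+1/2} - p>, where
   g_t = V_t(x_{t+1/2}).  Order the rounds by decreasing step size eta_t, ties broken by
   time.  Since every agent receives feedback in its own arrival order, s in S_t implies
   S_s included in S_t, hence D_s <= D_t and eta_t <= eta_s: the rounds of S_t all precede
   t, and sum_{s in S_t} g_s is the sum W_t of all predecessors of t minus a lag M_t made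
   of predecessors that are not yet received, all within tau of t.  Expanding
   <g_t, x_{t+1/2} - p> then leaves three kinds of terms.
   - <g_t, x_1 - p> - eta_t/2 (|W_t + g_t|^2 - |W_t|^2): summation by parts along the order,
     whose weights are nonincreasing, bounds their sum by <H, x_1 - p> - eta_min/2 |H|^2,
     hence by r^2 / (2 eta_min).
   - The lag terms eta_t <g_t, g_u> with |t - u| <= tau: Young's inequality pays for them,
     as (4 tau + 1) eta_t <= gamma_u for such u.
   - The optimistic step -gamma_t <g_t, Vt_t(x_t)>: Lipschitz continuity and
     gamma_t <= 1/(sqrt 2 L) leave gamma_t |V_t(x_t) - Vt_t(x_t)|^2, and these add up by
     the AdaGrad inequality sum_t a_t / sqrt(a_1 + ... + a_t) <= 2 sqrt(a_1 + ... + a_T). *)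

From HB Require Import structures.
From mathcomp Require Import all_boot all_order all_algebra.
From mathcomp Require Import all_classical all_reals all_analysis.
From mathcomp Require Import lra ring zify.
Set Implicit Arguments. Unset Strict Implicit. Unset Printing Implicit Defensive.
Import Order.TTheory GRing.Theory Num.Theory.
Import numFieldNormedType.Exports.
Local Open Scope ring_scope.

Local Notation sqnorm u := (dotv u u).

Section InnerProduct.
Variables (R : realType) (n : nat).
Implicit Types (u v w : 'rV[R]_n) (k : R).

Lemma dotvC u v : dotv u v = dotv v u.
Proof. by apply: eq_bigr => i _; rewrite mulrC. Qed.

Lemma dotvDl u v w : dotv (u + v) w = dotv u w + dotv v w.
Proof. by rewrite /dotv -big_split; apply: eq_bigr => i _; rewrite mxE mulrDl. Qed.

Lemma dotvZl k u v : dotv (k *: u) v = k * dotv u v.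
Proof. by rewrite /dotv mulr_sumr; apply: eq_bigr => i _; rewrite mxE mulrA. Qed.

Lemma dotvNl u v : dotv (- u) v = - dotv u v.
Proof. by rewrite -scaleN1r dotvZl mulN1r. Qed.

Lemma dotvBl u v w : dotv (u - v) w = dotv u w - dotv v w.
Proof. by rewrite dotvDl dotvNl. Qed.

Lemma dotv0l v : dotv 0 v = 0.
Proof. by rewrite /dotv big1 // => i _; rewrite mxE mul0r. Qed.

Lemma dotv_suml (I : Type) (s : seq I) (P : pred I) (F : I -> 'rV[R]_n) w :
  dotv (\sum_(i <- s | P i) F i) w = \sum_(i <- s | P i) dotv (F i) w.
Proof. exact: (big_morph (fun u => dotv u w) (fun u v => dotvDl u v w) (dotv0l w)). Qed.

Lemma dotvDr u v w : dotv w (u + v) = dotv w u + dotv w v.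
Proof. by rewrite dotvC dotvDl !(dotvC w). Qed.

Lemma dotvZr k u v : dotv v (k *: u) = k * dotv v u.
Proof. by rewrite dotvC dotvZl dotvC. Qed.

Lemma dotvNr u v : dotv v (- u) = - dotv v u.
Proof. by rewrite dotvC dotvNl dotvC. Qed.

Lemma dotvBr u v w : dotv w (u - v) = dotv w u - dotv w v.
Proof. by rewrite dotvDr dotvNr. Qed.

Lemma dotv_sumr (I : Type) (s : seq I) (P : pred I) (F : I -> 'rV[R]_n) w :
  dotv w (\sum_(i <- s | P i) F i) = \sum_(i <- s | P i) dotv w (F i).
Proof. by rewrite dotvC dotv_suml; apply: eq_bigr => i _; rewrite dotvC. Qed.

Lemma dotvv_ge0 u : 0 <= sqnorm u.
Proof. by apply: sumr_ge0 => i _; rewrite -expr2 sqr_ge0. Qed.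

Lemma dotvv_le0 u : sqnorm u <= 0 -> u = 0.
Proof.
move=> u_le0; have /eqP : sqnorm u = 0 by apply/le_anti; rewrite u_le0 dotvv_ge0.
rewrite psumr_eq0 => [/allP u0|i _]; last by rewrite -expr2 sqr_ge0.
apply/rowP => i; rewrite mxE; move: (u0 i (mem_index_enum i)).
by rewrite implyTb -expr2 sqrf_eq0 => /eqP.
Qed.

Lemma sqr_enorm u : enorm u ^+ 2 = sqnorm u.
Proof. by rewrite sqr_sqrtr // dotvv_ge0. Qed.

Lemma dotvv_le_sqr u c : enorm u <= c -> sqnorm u <= c ^+ 2.
Proof. by move=> uc; rewrite -sqr_enorm ler_sqr ?nnegrE ?(le_trans _ uc) ?sqrtr_ge0. Qed.

Lemma enorm_le0 u : enorm u <= 0 -> u = 0.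
Proof. by move=> /dotvv_le_sqr; rewrite expr0n => /dotvv_le0. Qed.

Lemma dotvv_le_of_enorm_le u v c : 0 <= c -> enorm u <= c * enorm v ->
  sqnorm u <= c ^+ 2 * sqnorm v.
Proof.
move=> c_ge0 uv; rewrite -!sqr_enorm -exprMn.
by apply: lerXn2r; rewrite // nnegrE ?mulr_ge0 ?sqrtr_ge0.
Qed.

Lemma dotvvD u v : sqnorm (u + v) = sqnorm u + 2 * dotv u v + sqnorm v.
Proof. by rewrite !dotvDl !dotvDr (dotvC v u); ring. Qed.

Lemma dotvvB u v : sqnorm (u - v) = sqnorm u - 2 * dotv u v + sqnorm v.
Proof. by rewrite !dotvBl !dotvBr (dotvC v u); ring. Qed.

Lemma dotvvZ k u : sqnorm (k *: u) = k ^+ 2 * sqnorm u.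
Proof. by rewrite dotvZl dotvZr mulrA -expr2. Qed.

Lemma dotv_le_mean u v : 2 * dotv u v <= sqnorm u + sqnorm v.
Proof. by have := dotvv_ge0 (u - v); rewrite dotvvB; lra. Qed.

Lemma dotvvD_le u v : sqnorm (u + v) <= 2 * sqnorm u + 2 * sqnorm v.
Proof. by have := dotv_le_mean u v; rewrite dotvvD; lra. Qed.

Lemma dotv_le_young l u v : 0 < l -> dotv u v <= sqnorm u / (2 * l) + l / 2 * sqnorm v.
Proof.
move=> l_gt0; have := dotvv_ge0 (u - l *: v); rewrite dotvvB dotvZr dotvvZ => sq_ge0.
rewrite -subr_ge0.
have -> : sqnorm u / (2 * l) + l / 2 * sqnorm v - dotv u v =
          (sqnorm u - 2 * (l * dotv u v) + l ^+ 2 * sqnorm v) / (2 * l).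
  by field; lra.
by rewrite divr_ge0 //; lra.
Qed.

End InnerProduct.

Section ConvexGradient.
Local Open Scope classical_set_scope.

(* Each difference quotient (f (y + h (p - y)) - f y) / h, 0 < h <= 1, is at most
   f p - f y; so is their limit, the directional derivative <V y, p - y>. *)
Lemma convex_gradient_le (R : realType) (n : nat) (f : 'rV[R]_n -> R)
    (V : 'rV[R]_n -> 'rV[R]_n) y p :
  convex_fun f -> is_gradient f V -> f y - f p <= dotv (V y) (y - p).
Proof.
move=> f_convex f_grad; have [f_diff dfE] := f_grad y.
set v := p - y.
have f_der : derivable f y v by exact: diff_derivable.
suff : 'D_v f y <= f p - f y.
  by rewrite deriveE // dfE -[y - p]opprB dotvNr; lra.
apply: (@cvgr_to_le _ (0^'+) _ _ (fun h : R => h^-1 *: ((f \o shift y) (h *: v) - f y))).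
  apply: cvg_trans; last exact: f_der.
  by apply: cvg_app; apply: within_subset => u /= u_gt0; exact: lt0r_neq0.
near=> h.
have h_gt0 : 0 < h by near: h; exact: nbhs_right_gt.
have h_le1 : h <= 1 by near: h; exact: nbhs_right_le.
rewrite /=; have -> : h *: v + y = h *: p + (1 - h) *: y.
  by rewrite /v scalerBr scalerBl scale1r [RHS]addrA [LHS]addrAC.
have := f_convex p y h; rewrite h_le1 ltW //= => /(_ isT) f_le.
rewrite -[leRHS](mulKf (lt0r_neq0 h_gt0)) /GRing.scale /=.
by rewrite ler_pM2l ?invr_gt0 //; lra.
Unshelve. all: by end_near.
Qed.

End ConvexGradient.

Section WeightOrder.
Variables (R : realType) (w : nat -> R).

Definition wprec (u t : nat) : bool := (w t < w u) || ((w u == w t) && (u < t)%N).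

Lemma wprec_irr u : wprec u u = false.
Proof. by rewrite /wprec ltxx ltnn andbF. Qed.

Lemma wprec_asym u t : wprec u t -> wprec t u = false.
Proof.
rewrite /wprec => /orP[wtu|/andP[/eqP-> ut]]; first by rewrite (lt_gtF wtu) (lt_eqF wtu).
by rewrite ltxx eqxx /= ltnNge ltnW.
Qed.

Lemma wprec_total u t : u != t -> wprec u t || wprec t u.
Proof.
move=> ut; rewrite /wprec; case: (ltgtP (w t) (w u)) => //=.
by case: (ltngtP u t) => // uE; rewrite uE eqxx in ut.
Qed.

Lemma wprec_trans a b c : wprec a b -> wprec b c -> wprec a c.
Proof.
rewrite /wprec => /orP[ab|/andP[/eqP ab ab']] /orP[bc|/andP[/eqP bc bc']].
- by rewrite (lt_trans bc ab).
- by rewrite -bc ab.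
- by rewrite ab bc.
- by rewrite ab bc eqxx (ltn_trans ab' bc') orbT.
Qed.

Lemma wprec_le u t : wprec u t -> w t <= w u.
Proof. by rewrite /wprec => /orP[/ltW //|/andP[/eqP-> _]]. Qed.

Lemma wprec_max (U : seq nat) :
  U != [::] -> exists2 m, m \in U & forall u, u \in U -> ~~ wprec m u.
Proof.
elim: U => [|x U IH] // _; have [->|/IH[m mU m_max]] := eqVneq U [::].
  by exists x; rewrite ?mem_seq1 // => u; rewrite mem_seq1 => /eqP->; rewrite wprec_irr.
case: (boolP (wprec m x)) => [mx|xm].
  exists x; first exact: mem_head.
  move=> u; rewrite in_cons => /predU1P[->|uU]; first by rewrite wprec_irr.
  by apply: contra (m_max u uU); apply: wprec_trans.
exists m; first by rewrite in_cons mU orbT.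
by move=> u; rewrite in_cons => /predU1P[->|/m_max].
Qed.

End WeightOrder.

Section Telescoping.
Variables (R : realType) (n : nat) (w : nat -> R) (g : nat -> 'rV[R]_n).

Definition wprefix (U : seq nat) (t : nat) : 'rV[R]_n := \sum_(u <- U | wprec w u t) g u.

Lemma wprefix_telescope_ge U l : uniq U -> (forall t, t \in U -> l <= w t) ->
  l * sqnorm (\sum_(t <- U) g t) <=
  \sum_(t <- U) w t * (sqnorm (wprefix U t + g t) - sqnorm (wprefix U t)).
Proof.
(* Peel off the last round m of the order: it has the smallest weight, and its prefix is
   the sum over all the other rounds. *)
elim: {U}(size U) {-2}U (erefl (size U)) l => [|k IH] U sizeU l U_uniq l_le.
  by rewrite (size0nil sizeU) !big_nil dotv0l mulr0.
have /(wprec_max w)[m mU m_max] : U != [::] by case: U sizeU {U_uniq l_le}.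
have U_perm := perm_to_rem mU.
set U' := rem m U.
have U'_uniq : uniq U' := rem_uniq m U_uniq.
have m_last u : u \in U' -> wprec w u m.
  move=> uU'; have um : u != m by apply: contraTneq uU' => ->; rewrite mem_rem_uniqF.
  by have := wprec_total w um; rewrite (negbTE (m_max u (mem_rem uU'))) orbF.
have prefix_m : wprefix U m = \sum_(u <- U') g u.
  rewrite /wprefix (perm_big _ U_perm) big_cons wprec_irr big_seq_cond [RHS]big_seq.
  by apply: eq_bigl => u; case: (boolP (u \in U')) => //= /m_last.
have prefixE t : t \in U' -> wprefix U t = wprefix U' t.
  move=> tU'; rewrite /wprefix (perm_big _ U_perm) big_cons.
  by rewrite (negbTE (m_max t (mem_rem tU'))).
rewrite !(perm_big _ U_perm) !big_cons /= prefix_m (addrC (g m)).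
rewrite (eq_big_seq (fun t => w t * (sqnorm (wprefix U' t + g t) - sqnorm (wprefix U' t))));
  last by move=> t /prefixE->.
have sizeU' : size U' = k by rewrite size_rem // sizeU.
have := IH U' sizeU' (w m) U'_uniq (fun t tU' => wprec_le (m_last t tU')).
have := ler_wpM2r (dotvv_ge0 (\sum_(u <- U') g u + g m)) (l_le m mU).
lra.
Qed.

End Telescoping.

Lemma count_window_le (c tau : nat) (s : seq nat) : uniq s ->
  (count (fun v => (v != c) && (v <= c + tau)%N && (c <= v + tau)%N) s <= 2 * tau)%N.
Proof.
move=> s_uniq; set window := seq.filter (predC1 c) (iota (c - tau) (2 * tau).+1).
have size_window : size window = (2 * tau)%N.
  have := count_predC (pred1 c) (iota (c - tau) (2 * tau).+1).
  rewrite size_filter size_iota (count_uniq_mem c (iota_uniq _ _)) mem_iota.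
  have -> : (c - tau <= c < c - tau + (2 * tau).+1)%N by apply/andP; split; lia.
  by rewrite add1n => /succn_inj.
rewrite -size_filter -size_window; apply: uniq_leq_size; first exact: filter_uniq.
move=> v; rewrite !mem_filter mem_iota => /andP[/andP[/andP[vc v_le] c_le] _] /=.
by rewrite vc /=; lia.
Qed.

Lemma ler_sum_subpred (R : realType) (I : eqType) (s : seq I) (P Q : pred I) (F : I -> R) :
  (forall i, i \in s -> P i -> Q i) -> (forall i, 0 <= F i) ->
  \sum_(i <- s | P i) F i <= \sum_(i <- s | Q i) F i.
Proof.
move=> PQ F_ge0; rewrite big_seq_cond [leRHS]big_seq_cond big_mkcond [leRHS]big_mkcond /=.
apply: ler_sum => i _; case: (boolP (i \in s)) => //= iS.
by case: (boolP (P i)) => [/(PQ i iS)->|_] //; case: (Q i).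
Qed.

Lemma sum_nat_le_shift (R : realType) (F : nat -> R) (c : R) (m k1 k2 : nat) :
  0 <= c -> (forall i, (m <= i < k2)%N -> F i <= c) -> (k1 <= k2)%N ->
  \sum_(m <= i < k2) F i <= \sum_(m <= i < k1) F i + c * (k2 - k1)%:R.
Proof.
move=> c_ge0 F_le k12; have tail j : (m <= j)%N -> \sum_(j <= i < k2) F i <= c *+ (k2 - j).
  move=> mj; rewrite -sumr_const_nat; apply: ler_sum_nat => i /andP[ji ik2]; apply: F_le; lia.
rewrite mulr_natr; case: (leqP m k1) => [mk1|k1m].
  by rewrite (big_cat_nat mk1 k12) lerD2l tail.
rewrite (big_geq (ltnW k1m)) add0r; case: (leqP m k2) => [mk2|k2m].
  by rewrite (le_trans (tail m (leqnn m))) // ler_wpMn2l //; lia.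
by rewrite (big_geq (ltnW k2m)) mulrn_wge0.
Qed.

Lemma sum_div_sqrt_prefix_le (R : realType) (a : nat -> R) (T : nat) :
  (forall t, 0 <= a t) ->
  \sum_(1 <= t < T.+1) a t / Num.sqrt (\sum_(1 <= s < t.+1) a s)
    <= 2 * Num.sqrt (\sum_(1 <= s < T.+1) a s).
Proof.
move=> a_ge0; elim: T => [|T IH]; first by rewrite !big_geq // sqrtr0 mulr0.
rewrite big_nat_recr //= [X in Num.sqrt X]big_nat_recr //=.
set Y := \sum_(1 <= s < T.+1) a s; set X := Y + a T.+1.
have Y_ge0 : 0 <= Y by apply: sumr_ge0.
have YX : Num.sqrt Y <= Num.sqrt X by rewrite ler_sqrt ?addr_ge0 // lerDl.
suff : a T.+1 / Num.sqrt X <= 2 * (Num.sqrt X - Num.sqrt Y) by lra.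
have [X0|X_gt0] := eqVneq (Num.sqrt X) 0; first by rewrite X0 invr0 mulr0 -X0; lra.
have sX_gt0 : 0 < Num.sqrt X by rewrite lt_def X_gt0 sqrtr_ge0.
have -> : a T.+1 = Num.sqrt X ^+ 2 - Num.sqrt Y ^+ 2.
  by rewrite !sqr_sqrtr ?addr_ge0 // /X; ring.
rewrite ler_pdivrMr // -subr_ge0.
have -> : 2 * (Num.sqrt X - Num.sqrt Y) * Num.sqrt X - (Num.sqrt X ^+ 2 - Num.sqrt Y ^+ 2) =
          (Num.sqrt X - Num.sqrt Y) ^+ 2 by ring.
exact: sqr_ge0.
Qed.

Section CrossTerms.
Variables (R : realType) (n tau : nat) (U : seq nat) (near : nat -> nat -> bool).
Variables (e z : nat -> R) (g : nat -> 'rV[R]_n).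
Hypothesis U_uniq : uniq U.
Hypothesis near_window : forall t u, t \in U -> u \in U -> near t u ->
  (u != t) && (u <= t + tau)%N && (t <= u + tau)%N.
Hypothesis near_le : forall t u, t \in U -> u \in U -> near t u -> e t <= z u.
Hypotheses (e_ge0 : forall t, 0 <= e t) (z_ge0 : forall t, 0 <= z t).

Lemma cross_terms_le :
  \sum_(t <- U) e t * dotv (g t) (\sum_(u <- U | near t u) g u) <=
  \sum_(t <- U) (tau%:R * e t + tau%:R * z t) * sqnorm (g t).
Proof.
have const_le (P : pred nat) (K : R) c : 0 <= K -> (forall v, v \in U -> P v ->
    (v != c) && (v <= c + tau)%N && (c <= v + tau)%N) ->
    \sum_(v <- U | P v) K <= K *+ (2 * tau).
  move=> K_ge0 P_window; rewrite big_seq_cond big_const_seq iter_addr_0.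
  apply: ler_wpMn2l => //; apply: leq_trans (count_window_le c tau U_uniq).
  by apply: sub_count => v /andP[]; exact: P_window.
pose A t := e t * sqnorm (g t) / 2; pose B u := z u * sqnorm (g u) / 2.
have pair_le t u : t \in U -> u \in U -> near t u -> e t * dotv (g t) (g u) <= A t + B u.
  move=> tU uU ntu; have := dotv_le_mean (g t) (g u); have := dotvv_ge0 (g u).
  by have := near_le tU uU ntu; have := e_ge0 t; rewrite /A /B; nra.
apply: (@le_trans _ _ (\sum_(t <- U) \sum_(u <- U | near t u) (A t + B u))).
  rewrite big_seq [leRHS]big_seq; apply: ler_sum => t tU.
  rewrite dotv_sumr mulr_sumr big_seq_cond [leRHS]big_seq_cond.
  by apply: ler_sum => u /andP[uU ntu]; exact: pair_le.
rewrite (eq_bigr _ (fun t _ => big_split _ _ _ _ _)) big_split /=.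
rewrite [X in _ + X](exchange_big_dep xpredT) //= -big_split /= big_seq [leRHS]big_seq.
apply: ler_sum => t tU; rewrite mulrDl; apply: lerD.
  have A_ge0 : 0 <= A t by rewrite /A divr_ge0 // mulr_ge0 // dotvv_ge0.
  apply: le_trans (const_le _ _ t A_ge0 (fun u uU => near_window tU uU)) _.
  by rewrite -[A t *+ _]mulr_natr natrM /A; lra.
have B_ge0 : 0 <= B t by rewrite /B divr_ge0 // mulr_ge0 // dotvv_ge0.
have near_t u : u \in U -> near u t -> (u != t) && (u <= t + tau)%N && (t <= u + tau)%N.
  move=> uU /(near_window uU tU).
  by rewrite eq_sym => /andP[/andP[-> ?] ?]; apply/andP.
apply: le_trans (const_le _ _ t B_ge0 near_t) _.
by rewrite -[B t *+ _]mulr_natr natrM /B; lra.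
Qed.

End CrossTerms.

Lemma ler_wpdiv2l (R : realFieldType) (x p q : R) : 0 <= x -> 0 < q -> q <= p -> x / p <= x / q.
Proof.
by move=> x_ge0 q_gt0 qp; rewrite ler_wpM2l // lef_pV2 // posrE (lt_le_trans q_gt0).
Qed.

Section StepSizes.
Variables (R : realType) (r L G : R) (tau : nat).

Definition delay_factor : R := 4 * tau%:R + 1.
Definition gamma_offset : R := 4 * G ^+ 2 * (tau%:R + 1).
Definition eta_offset : R := 4 * G ^+ 2 * (3 * tau%:R + 1).

Definition gamma_step (D : R) : R :=
  Num.min (r * Num.sqrt delay_factor / (2 * Num.sqrt (D + gamma_offset)))
          (1 / (Num.sqrt 2 * L)).
Definition eta_step (D : R) : R :=
  Num.min (r / (2 * Num.sqrt (delay_factor * (D + eta_offset))))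
          (1 / (Num.sqrt 2 * L * delay_factor)).
Definition regret_bound (VT : R) : R :=
  Num.max (Num.sqrt 2 * r ^+ 2 * L * delay_factor)
          (2 * r * Num.sqrt (delay_factor * (VT + eta_offset))).

Hypotheses (r_ge0 : 0 <= r) (L_gt0 : 0 < L) (G_gt0 : 0 < G).

Lemma delay_factor_gt0 : 0 < delay_factor.
Proof. by rewrite /delay_factor; have := ler0n R tau; lra. Qed.

Lemma gamma_offset_gt0 : 0 < gamma_offset.
Proof. by rewrite /gamma_offset !mulr_gt0 ?exprn_gt0 ?ltr_wpDl. Qed.

Lemma eta_offset_gt0 : 0 < eta_offset.
Proof. by rewrite /eta_offset !mulr_gt0 ?exprn_gt0 ?ltr_wpDl ?mulr_ge0. Qed.

Lemma gamma_offset_le_eta_offset : gamma_offset <= eta_offset.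
Proof.
apply: ler_wpM2l; first by rewrite mulr_ge0 ?sqr_ge0.
by have := ler0n R tau; lra.
Qed.

Lemma gamma_step_ge0 D : 0 <= gamma_step D.
Proof.
by rewrite le_min !divr_ge0 ?mulr_ge0 ?sqrtr_ge0 ?(ltW L_gt0).
Qed.

Lemma eta_step_ge0 D : 0 <= eta_step D.
Proof.
by rewrite le_min !divr_ge0 ?mulr_ge0 ?sqrtr_ge0 ?(ltW L_gt0) ?(ltW delay_factor_gt0).
Qed.

Lemma gamma_step_lipschitz D : 2 * L ^+ 2 * gamma_step D ^+ 2 <= 1.
Proof.
set b := 1 / (Num.sqrt 2 * L).
have b_unit : 2 * L ^+ 2 * b ^+ 2 = 1.
  by rewrite /b expr_div_n exprMn sqr_sqrtr //; field; rewrite lt0r_neq0.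
rewrite -[X in _ <= X]b_unit; apply: ler_wpM2l; first by rewrite mulr_ge0 ?sqr_ge0.
have gamma_le : gamma_step D <= b by rewrite ge_min lexx orbT.
by rewrite ler_sqr ?nnegrE ?gamma_step_ge0 ?(le_trans (gamma_step_ge0 D)).
Qed.

Lemma eta_step_le_gamma_step D D' : 0 <= D' -> D' + gamma_offset <= D + eta_offset ->
  delay_factor * eta_step D <= gamma_step D'.
Proof.
move=> D'_ge0 DD'; have c_gt0 := delay_factor_gt0; have C_gt0 := gamma_offset_gt0.
have sc_gt0 : 0 < Num.sqrt delay_factor by rewrite sqrtr_gt0.
rewrite le_min; apply/andP; split.
  have eta_le : eta_step D <= r / (2 * Num.sqrt (delay_factor * (D + eta_offset))).
    by rewrite ge_min lexx.
  apply: le_trans (ler_wpM2l (ltW c_gt0) eta_le) _.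
  have sD'_gt0 : 0 < Num.sqrt (D' + gamma_offset) by rewrite sqrtr_gt0; lra.
  have sDD' : Num.sqrt (D' + gamma_offset) <= Num.sqrt (D + eta_offset).
    by rewrite ler_sqrt //; lra.
  rewrite sqrtrM ?(ltW c_gt0) // -{1}(sqr_sqrtr (ltW c_gt0)).
  set sc := Num.sqrt delay_factor; set sD := Num.sqrt (D + eta_offset).
  have -> : sc ^+ 2 * (r / (2 * (sc * sD))) = r * sc / (2 * sD).
    by field; rewrite lt0r_neq0 ?(lt_le_trans sD'_gt0) ?lt0r_neq0.
  by apply: ler_wpdiv2l; rewrite ?mulr_ge0 ?sqrtr_ge0 ?mulr_gt0 ?ler_pM2l.
have eta_le : eta_step D <= 1 / (Num.sqrt 2 * L * delay_factor) by rewrite ge_min lexx orbT.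
apply: le_trans (ler_wpM2l (ltW c_gt0) eta_le) _.
by rewrite [leLHS](_ : _ = 1 / (Num.sqrt 2 * L)) //; field; rewrite !lt0r_neq0 ?sqrtr_gt0.
Qed.

Lemma eta_step_anti D D' : 0 <= D -> D <= D' -> eta_step D' <= eta_step D.
Proof.
move=> D_ge0 DD'; have c_gt0 := delay_factor_gt0; have C_gt0 := eta_offset_gt0.
apply: le_min2 => //; apply: ler_wpdiv2l => //.
  by rewrite mulr_gt0 // sqrtr_gt0 mulr_gt0 //; lra.
by rewrite ler_pM2l // ler_sqrt ?mulr_ge0 ?ler_pM2l ?(ltW c_gt0) //; lra.
Qed.

Lemma gamma_step_le D A : 0 < A -> A <= D + gamma_offset ->
  gamma_step D <= r * Num.sqrt delay_factor / (2 * Num.sqrt A).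
Proof.
move=> A_gt0 AD; rewrite ge_min; apply/orP; left; apply: ler_wpdiv2l.
- by rewrite mulr_ge0 ?sqrtr_ge0.
- by rewrite mulr_gt0 ?sqrtr_gt0.
- by rewrite ler_pM2l // ler_sqrt //; lra.
Qed.

Lemma eta_step_regret_bound VT : 0 <= VT -> 0 < r ->
  0 < eta_step VT /\ r ^+ 2 <= eta_step VT * regret_bound VT.
Proof.
move=> VT_ge0 r_gt0; have c_gt0 := delay_factor_gt0; have C_gt0 := eta_offset_gt0.
have s_gt0 : 0 < Num.sqrt (delay_factor * (VT + eta_offset)).
  by rewrite sqrtr_gt0 mulr_gt0 //; lra.
have s2_gt0 : 0 < Num.sqrt 2 :> R by rewrite sqrtr_gt0.
have B1 : Num.sqrt 2 * r ^+ 2 * L * delay_factor <= regret_bound VT by rewrite le_max lexx.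
have B2 : 2 * r * Num.sqrt (delay_factor * (VT + eta_offset)) <= regret_bound VT.
  by rewrite le_max lexx orbT.
rewrite /eta_step; set a := r / _; set b := 1 / _.
have a_gt0 : 0 < a by rewrite divr_gt0 // mulr_gt0.
have b_gt0 : 0 < b by rewrite divr_gt0 // !mulr_gt0.
have [ab|ba] := leP a b; split => //.
  apply: le_trans (ler_wpM2l (ltW a_gt0) B2).
  by rewrite [leRHS](_ : _ = r ^+ 2) // /a; field; rewrite lt0r_neq0.
apply: le_trans (ler_wpM2l (ltW b_gt0) B1).
by rewrite [leRHS](_ : _ = r ^+ 2) // /b; field; rewrite !lt0r_neq0.
Qed.

Lemma regret_bound_ge0 VT : 0 <= regret_bound VT.
Proof. by rewrite le_max; apply/orP; right; rewrite !mulr_ge0 ?sqrtr_ge0. Qed.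

Lemma anchor_term_le (n : nat) (H q : 'rV[R]_n) VT : 0 <= VT -> sqnorm q <= r ^+ 2 ->
  dotv H q - eta_step VT / 2 * sqnorm H <= regret_bound VT / 2.
Proof.
move=> VT_ge0 q_le; have H_ge0 := dotvv_ge0 H; have eta_ge0 := eta_step_ge0 VT.
have B_ge0 := regret_bound_ge0 VT.
(* For [r = 0] the step size vanishes and Young's inequality is unavailable, but [q = 0]. *)
have [r0|r_neq0] := eqVneq r 0.
  have -> : q = 0 by apply: dotvv_le0; rewrite r0 expr0n in q_le.
  by rewrite dotvC dotv0l; have := mulr_ge0 eta_ge0 H_ge0; lra.
have r_gt0 : 0 < r by rewrite lt_def r_neq0.
have [eta_gt0 r_le] := eta_step_regret_bound VT_ge0 r_gt0.
have := dotv_le_young q H eta_gt0; rewrite dotvC.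
have : sqnorm q / (2 * eta_step VT) <= regret_bound VT / 2.
  rewrite ler_pdivrMr ?mulr_gt0 //.
  by rewrite [leRHS](_ : _ = eta_step VT * regret_bound VT); [lra | field].
lra.
Qed.

Lemma sqrt_err_le_regret_bound VT : 0 <= VT ->
  r * Num.sqrt delay_factor * Num.sqrt VT <= regret_bound VT / 2.
Proof.
move=> VT_ge0; have c_gt0 := delay_factor_gt0; have C_gt0 := eta_offset_gt0.
have : Num.sqrt delay_factor * Num.sqrt VT <= Num.sqrt (delay_factor * (VT + eta_offset)).
  by rewrite -sqrtrM ?(ltW c_gt0) // ler_sqrt ?ler_pM2l ?mulr_ge0 ?ltW //; lra.
move=> /(ler_wpM2l r_ge0).
have : 2 * r * Num.sqrt (delay_factor * (VT + eta_offset)) <= regret_bound VT.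
  by rewrite le_max lexx orbT.
lra.
Qed.

End StepSizes.

Lemma arrived_before_prefix_closed (A : Type) (T : nat) (sigma : A -> nat -> nat) (a : A)
    (F : pred nat) (m : nat) :
  (forall k k', (1 <= k <= T)%N -> (1 <= k' <= T)%N -> sigma a k = sigma a k' -> k = k') ->
  (m <= T)%N -> (forall s, F s <-> exists k, (1 <= k <= m)%N /\ sigma a k = s) ->
  forall s u, F s -> arrived_before T sigma a u s -> F u.
Proof.
move=> sigma_inj mT F_prefix s u /F_prefix[k' [k'm <-]] [k [j [k1 [kj [jT [<- jk']]]]]].
apply/F_prefix; exists k; split => //.
have j_eq : j = k' by apply: sigma_inj => //; lia.
by lia.
Qed.

Section DodaAnalysis.
Variables (R : realType) (n T tau : nat) (S : nat -> pred nat).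
Variables (V Vt : nat -> 'rV[R]_n -> 'rV[R]_n) (L G r : R) (x1 p : 'rV[R]_n).
Variables (x xh : nat -> 'rV[R]_n).

Hypothesis S_range : forall t, (1 <= t <= T)%N -> forall s, S t s -> (1 <= s < t)%N.
Hypothesis S_delay :
  forall t, (1 <= t <= T)%N -> forall s, (1 <= s)%N -> (s + tau < t)%N -> S t s.
Hypothesis S_trans : forall t s u, (1 <= t <= T)%N -> S t s -> S s u -> S t u.
Hypothesis L_gt0 : 0 < L.
Hypothesis V_lipschitz : forall t, (1 <= t <= T)%N ->
  forall y z, enorm (V t y - V t z) <= L * enorm (y - z).
Hypothesis V_bounded : forall t, (1 <= t <= T)%N ->
  forall y, enorm (V t y) <= G /\ enorm (Vt t y) <= G.
Hypothesis G_gt0 : 0 < G.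
Hypothesis p_near : enorm (p - x1) <= r.

Local Notation rounds := (index_iota 1 T.+1).

Definition grad_at t := V t (xh t).
Definition hint_at t := Vt t (x t).
Definition hint_err t := enorm (V t (x t) - hint_at t) ^+ 2.
Definition prefix_err k := \sum_(1 <= s < k) hint_err s.
Definition delay_err t := \sum_(1 <= s < t | S t s) hint_err s.
Definition gamma_at t := gamma_step r L G tau (delay_err t).
Definition eta_at t := eta_step r L G tau (delay_err t).
Definition lag t := \sum_(u <- rounds | wprec eta_at u t && ~~ S t u) grad_at u.

Local Notation preceding t := (wprefix eta_at grad_at rounds t).
Local Notation growth t := (sqnorm (preceding t + grad_at t) - sqnorm (preceding t)).

Hypothesis x_def : forall t, (1 <= t <= T)%N ->
  x t = x1 - eta_at t *: \sum_(1 <= s < t | S t s) grad_at s.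
Hypothesis xh_def : forall t, (1 <= t <= T)%N -> xh t = x t - gamma_at t *: hint_at t.

Lemma mem_rounds t : (t \in rounds) = (1 <= t <= T)%N.
Proof. by rewrite mem_index_iota ltnS. Qed.

Lemma rounds_uniq : uniq rounds.
Proof. exact: iota_uniq. Qed.

Lemma r_ge0 : 0 <= r.
Proof. exact: le_trans (sqrtr_ge0 _) p_near. Qed.

Lemma hint_err_ge0 t : 0 <= hint_err t.
Proof. exact: sqr_ge0. Qed.

Lemma delay_err_ge0 t : 0 <= delay_err t.
Proof. by apply: sumr_ge0 => s _; exact: hint_err_ge0. Qed.

Lemma hint_err_le t : (1 <= t <= T)%N -> hint_err t <= 4 * G ^+ 2.
Proof.
move=> ht; rewrite /hint_err /hint_at sqr_enorm.
have [Vx_le Vtx_le] := V_bounded ht (x t).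
have := dotvvD_le (V t (x t)) (- Vt t (x t)); rewrite dotvNl dotvNr opprK.
by have := dotvv_le_sqr Vx_le; have := dotvv_le_sqr Vtx_le; lra.
Qed.

Lemma prefix_err_le k1 k2 : (k1 <= k2 <= T.+1)%N ->
  prefix_err k2 <= prefix_err k1 + 4 * G ^+ 2 * (k2 - k1)%:R.
Proof.
move=> /andP[k12 k2T]; apply: sum_nat_le_shift => //; first by rewrite mulr_ge0 ?sqr_ge0.
by move=> i /andP[i1 ik2]; apply: hint_err_le; lia.
Qed.

Lemma delay_err_le_prefix t : delay_err t <= prefix_err t.
Proof. by apply: ler_sum_subpred => // s; rewrite hint_err_ge0. Qed.

Lemma prefix_le_delay_err t : (1 <= t <= T)%N -> prefix_err (t - tau) <= delay_err t.
Proof.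
move=> ht; rewrite /prefix_err (big_nat_widen _ _ _ _ _ (leq_subr tau t)).
apply: ler_sum_subpred => [s|]; last exact: hint_err_ge0.
by rewrite mem_index_iota => /andP[s1 st] /= s_lt; apply: S_delay => //; lia.
Qed.

Lemma delay_err_le_total t : (1 <= t <= T)%N -> delay_err t <= prefix_err T.+1.
Proof.
move=> ht; rewrite /delay_err (big_nat_widen _ _ _ _ _ (_ : t <= T.+1)%N); last by lia.
by apply: ler_sum_subpred => // s; rewrite hint_err_ge0.
Qed.

Lemma delay_err_mono t s : (1 <= t <= T)%N -> S t s -> delay_err s <= delay_err t.
Proof.
move=> ht Sts; have /andP[_ st] := S_range ht Sts.
rewrite /delay_err (big_nat_widen _ _ _ _ _ (ltnW st)).
apply: ler_sum_subpred => [u _ /andP[Ssu _]|]; last exact: hint_err_ge0.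
exact: S_trans Sts Ssu.
Qed.

Lemma delay_err_window t u : (1 <= t <= T)%N -> (1 <= u <= T)%N ->
  (u <= t + tau)%N -> (t <= u + tau)%N ->
  delay_err u + gamma_offset G tau <= delay_err t + eta_offset G tau.
Proof.
move=> ht hu ut tu; have u_le := delay_err_le_prefix u.
have prefix_le := prefix_err_le (ltac:(lia) : (t - tau <= u <= T.+1)%N).
have t_ge := prefix_le_delay_err ht.
(* [gamma_offset + 4 G^2 (2 tau) = eta_offset]: the origin of the constant 3 tau + 1. *)
have gap : ((u - (t - tau))%:R : R) <= 2 * tau%:R by rewrite -natrM ler_nat; lia.
have := ler_wpM2l (mulr_ge0 (ler0n R 4) (sqr_ge0 G)) gap.
by rewrite /gamma_offset /eta_offset; lra.
Qed.

Lemma prefix_succ_le t : (1 <= t <= T)%N -> prefix_err t.+1 <= delay_err t + gamma_offset G tau.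
Proof.
move=> ht; have prefix_le := prefix_err_le (ltac:(lia) : (t - tau <= t.+1 <= T.+1)%N).
have t_ge := prefix_le_delay_err ht.
have gap : ((t.+1 - (t - tau))%:R : R) <= tau%:R + 1 by rewrite natr1 ler_nat; lia.
have := ler_wpM2l (mulr_ge0 (ler0n R 4) (sqr_ge0 G)) gap.
by rewrite /gamma_offset; lra.
Qed.

Lemma gamma_at_ge0 t : 0 <= gamma_at t.
Proof. exact: gamma_step_ge0 G tau r_ge0 L_gt0 _. Qed.

Lemma eta_at_ge0 t : 0 <= eta_at t.
Proof. exact: eta_step_ge0 G tau r_ge0 L_gt0 _. Qed.

Lemma eta_at_le_gamma_at t u : delay_err u + gamma_offset G tau <= delay_err t + eta_offset G tau ->
  eta_at t <= gamma_at u / delay_factor R tau.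
Proof.
move=> tu; rewrite ler_pdivlMr ?delay_factor_gt0 // mulrC.
exact (eta_step_le_gamma_step r_ge0 L_gt0 G_gt0 (delay_err_ge0 u) tu).
Qed.

Lemma feedback_wprec t s : (1 <= t <= T)%N -> S t s -> wprec eta_at s t.
Proof.
move=> ht Sts; have /andP[_ st] := S_range ht Sts.
have := eta_step_anti L tau r_ge0 G_gt0 (delay_err_ge0 s) (delay_err_mono ht Sts).
by rewrite /wprec /eta_at le_eqVlt => /orP[/eqP->|->]; rewrite ?eqxx ?st ?orbT.
Qed.

Lemma lag_window t u : (1 <= t <= T)%N -> (1 <= u <= T)%N ->
  wprec eta_at u t -> ~~ S t u -> (u != t) && (u <= t + tau)%N && (t <= u + tau)%N.
Proof.
move=> ht hu ut nSut; have /andP[t1 _] := ht; have /andP[u1 _] := hu.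
have -> : u != t by apply: contraTneq ut => ->; rewrite wprec_irr.
rewrite /=; apply/andP; split; rewrite leqNgt; apply/negP => lt.
  by have := feedback_wprec hu (S_delay hu t1 lt); rewrite (wprec_asym ut).
by rewrite (S_delay ht u1 lt) in nSut.
Qed.

Lemma feedback_sum_eq t : (1 <= t <= T)%N ->
  \sum_(1 <= s < t | S t s) grad_at s = preceding t - lag t.
Proof.
move=> ht; rewrite /wprefix [in RHS](bigID (S t)) /= /lag addrK.
rewrite (big_nat_widen _ _ _ _ _ (_ : t <= T.+1)%N); last by lia.
apply: eq_bigl => s; case: (boolP (S t s)) => [Sts|]; rewrite ?andbF //= andbT.
by rewrite (feedback_wprec ht Sts); have /andP[_ ->] := S_range ht Sts.
Qed.

Lemma grad_dotv_eq t : (1 <= t <= T)%N ->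
  dotv (grad_at t) (xh t - p) = dotv (grad_at t) (x1 - p)
    - eta_at t / 2 * growth t
    + (eta_at t * sqnorm (grad_at t) / 2 + eta_at t * dotv (grad_at t) (lag t)
       - gamma_at t * dotv (grad_at t) (hint_at t)).
Proof.
move=> ht; rewrite xh_def // x_def // feedback_sum_eq // dotvvD (dotvC (preceding t)).
by rewrite !dotvBr !dotvZr !dotvBr; field.
Qed.

Lemma optimistic_step_le t : (1 <= t <= T)%N ->
  - (gamma_at t * dotv (grad_at t) (hint_at t))
    <= gamma_at t * hint_err t - gamma_at t * sqnorm (grad_at t) / 2.
Proof.
move=> ht; set g := grad_at t; set h := hint_at t; set y := V t (x t).
have step_err : sqnorm (g - y) <= L ^+ 2 * (gamma_at t ^+ 2 * sqnorm h).
  have step : xh t - x t = - (gamma_at t *: h) by rewrite xh_def // addrAC subrr add0r.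
  have := dotvv_le_of_enorm_le (ltW L_gt0) (V_lipschitz ht (xh t) (x t)).
  by rewrite step dotvNl dotvNr opprK dotvvZ; apply.
have err_split : sqnorm (g - h) <= 2 * hint_err t + 2 * sqnorm (g - y).
  rewrite /hint_err sqr_enorm -/y -/h.
  by have := dotvvD_le (y - h) (g - y); rewrite addrC subrKA.
have gamma_small := ler_wpM2r (dotvv_ge0 h) (gamma_step_lipschitz G tau r_ge0 L_gt0 (delay_err t)).
have g_h : sqnorm g / 2 - hint_err t <= dotv g h.
  by move: err_split gamma_small; rewrite dotvvB -/(gamma_at t); lra.
by have := ler_wpM2l (gamma_at_ge0 t) g_h; lra.
Qed.

Lemma sum_gamma_err_le :
  \sum_(t <- rounds) gamma_at t * hint_err t
    <= r * Num.sqrt (delay_factor R tau) * Num.sqrt (prefix_err T.+1).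
Proof.
set c := r * Num.sqrt (delay_factor R tau) / 2.
apply: (@le_trans _ _ (\sum_(t <- rounds) c * (hint_err t / Num.sqrt (prefix_err t.+1)))).
  rewrite big_seq [leRHS]big_seq; apply: ler_sum => t; rewrite mem_rounds => ht.
  have [->|err_neq0] := eqVneq (hint_err t) 0; first by rewrite !(mulr0, mul0r).
  have err_gt0 : 0 < hint_err t by rewrite lt_def err_neq0 hint_err_ge0.
  have prefix_gt0 : 0 < prefix_err t.+1.
    rewrite /prefix_err big_nat_recr /=; last by case/andP: ht.
    by rewrite ltr_wpDl // sumr_ge0 // => s _; exact: hint_err_ge0.
  have gamma_le := gamma_step_le L r_ge0 prefix_gt0 (prefix_succ_le ht).
  apply: le_trans (ler_wpM2r (hint_err_ge0 t) gamma_le) _.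
  rewrite [leLHS](_ : _ = c * (hint_err t / Num.sqrt (prefix_err t.+1))) //.
  by rewrite /c; field; rewrite lt0r_neq0 ?sqrtr_gt0.
have c_ge0 : 0 <= c by rewrite /c divr_ge0 ?mulr_ge0 ?sqrtr_ge0 ?r_ge0.
rewrite -mulr_sumr; apply: le_trans (ler_wpM2l c_ge0 (sum_div_sqrt_prefix_le T hint_err_ge0)) _.
rewrite [leLHS](_ : _ = r * Num.sqrt (delay_factor R tau) * Num.sqrt (prefix_err T.+1)) //.
by rewrite /c; field.
Qed.

Lemma lag_terms_le :
  \sum_(t <- rounds) (eta_at t * sqnorm (grad_at t) / 2 + eta_at t * dotv (grad_at t) (lag t)
                      - gamma_at t * dotv (grad_at t) (hint_at t))
    <= \sum_(t <- rounds) gamma_at t * hint_err t.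
Proof.
have c_gt0 : 0 < delay_factor R tau := delay_factor_gt0 R tau.
pose z t := gamma_at t / delay_factor R tau.
have z_ge0 t : 0 <= z t by rewrite divr_ge0 ?gamma_at_ge0 ?ltW.
have window t u : t \in rounds -> u \in rounds -> wprec eta_at u t && ~~ S t u ->
    (u != t) && (u <= t + tau)%N && (t <= u + tau)%N.
  by rewrite !mem_rounds => ht hu /andP[]; exact: lag_window.
have eta_le_z t u : t \in rounds -> u \in rounds -> wprec eta_at u t && ~~ S t u ->
    eta_at t <= z u.
  move=> tU uU /(window t u tU uU) /andP[/andP[_ ut] tu]; rewrite !mem_rounds in tU uU.
  by apply: eta_at_le_gamma_at; apply: delay_err_window.
have cross := cross_terms_le grad_at rounds_uniq window eta_le_z eta_at_ge0 z_ge0.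
apply: (@le_trans _ _ (\sum_(t <- rounds) (eta_at t * dotv (grad_at t) (lag t)
    + (eta_at t * sqnorm (grad_at t) / 2
       + (gamma_at t * hint_err t - gamma_at t * sqnorm (grad_at t) / 2))))).
  rewrite big_seq [leRHS]big_seq; apply: ler_sum => t; rewrite mem_rounds => ht.
  by have := optimistic_step_le ht; lra.
rewrite big_split /=; apply: le_trans (lerD cross (lexx _)) _.
rewrite -big_split /=; apply: ler_sum => t _.
have eta_le : eta_at t <= z t.
  by apply: eta_at_le_gamma_at; rewrite lerD2l gamma_offset_le_eta_offset.
have gamma_eq : gamma_at t = (4 * tau%:R + 1) * z t by rewrite /z mulrC divfK ?lt0r_neq0.
have gap : 0 <= (z t - eta_at t) * sqnorm (grad_at t).
  by rewrite mulr_ge0 ?subr_ge0 ?dotvv_ge0.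
(* The coefficient of |g_t|^2 left over is -(tau + 1/2) (z t - eta_at t). *)
have := mulr_ge0 (ler0n R tau) gap; rewrite gamma_eq; lra.
Qed.

Lemma doda_linearized_regret_le :
  \sum_(t <- rounds) dotv (grad_at t) (xh t - p) <= regret_bound r L G tau (prefix_err T.+1).
Proof.
set VT := prefix_err T.+1; set H := \sum_(t <- rounds) grad_at t.
have VT_ge0 : 0 <= VT by apply: sumr_ge0 => s _; exact: hint_err_ge0.
have eta_min t : t \in rounds -> eta_step r L G tau VT <= eta_at t.
  rewrite mem_rounds => ht.
  exact (eta_step_anti L tau r_ge0 G_gt0 (delay_err_ge0 t) (delay_err_le_total ht)).
have telescope := wprefix_telescope_ge grad_at rounds_uniq eta_min; rewrite -/H in telescope.
have q_le : sqnorm (x1 - p) <= r ^+ 2.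
  by rewrite -opprB dotvNl dotvNr opprK dotvv_le_sqr.
have anchor := anchor_term_le tau r_ge0 L_gt0 G_gt0 H VT_ge0 q_le.
have err_le := sqrt_err_le_regret_bound L tau r_ge0 G_gt0 VT_ge0.
under eq_big_seq => t /[!mem_rounds] ht do rewrite grad_dotv_eq //.
rewrite big_split big_split /= sumrN -dotv_suml.
have half : \sum_(t <- rounds) eta_at t / 2 * growth t
           = (\sum_(t <- rounds) eta_at t * growth t) / 2.
  by rewrite mulr_suml; apply: eq_bigr => t _; rewrite mulrAC.
have := lag_terms_le; have := sum_gamma_err_le.
rewrite half -/H -/VT; lra.
Qed.

End DodaAnalysis.

Theorem proposition7 (R : realType) (n : nat) (A : Type) (T tau : nat)
  (act : nat -> A) (S : A -> nat -> pred nat) (sigma : A -> nat -> nat)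
  (f : nat -> 'rV[R]_n -> R) (V Vt : nat -> 'rV[R]_n -> 'rV[R]_n)
  (L G r : R) (x1 p : 'rV[R]_n) (x xh : nat -> 'rV[R]_n) (gamma eta : nat -> R) :
  (* feedback sets: S a t is a subset of {1,..,t-1}, nondecreasing in t *)
  (forall a t, (1 <= t <= T)%N -> forall s, S a t s -> (1 <= s < t)%N) ->
  (forall a t t', (1 <= t)%N -> (t <= t' <= T)%N -> forall s, S a t s -> S a t' s) ->
  (* arrival orders: sigma a is a permutation of {1,..,T} *)
  (forall a k, (1 <= k <= T)%N -> (1 <= sigma a k <= T)%N) ->
  (forall a k k', (1 <= k <= T)%N -> (1 <= k' <= T)%N -> sigma a k = sigma a k' -> k = k') ->
  (* consistency: S a t = {sigma a 1, .., sigma a |S a t|} *)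
  (forall a t, (1 <= t <= T)%N -> exists m, (m <= T)%N /\
      forall s, S a t s <-> exists k, (1 <= k <= m)%N /\ sigma a k = s) ->
  (* maximum delay bounded by tau: {1,..,t-tau-1} included in S_t *)
  (forall t, (1 <= t <= T)%N -> forall s, (1 <= s)%N -> (s + tau < t)%N -> S (act t) t s) ->
  (* S_t included in R^i_t for every agent i and time t *)
  (forall a t, (1 <= t <= T)%N -> forall s, S (act t) t s -> arrived_before T sigma a s t) ->
  (* losses: convex, differentiable, V t = gradient of f t *)
  (forall t, (1 <= t <= T)%N -> convex_fun (f t) /\ is_gradient (f t) (V t)) ->
  0 < L ->
  (forall t, (1 <= t <= T)%N -> forall y z, enorm (V t y - V t z) <= L * enorm (y - z)) ->
  (forall t, (1 <= t <= T)%N -> forall y, enorm (V t y) <= G /\ enorm (Vt t y) <= G) ->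
  (* hint: Vt t = V s for some s in S_t (Vt t = 0 when S_t is empty) *)
  (forall t, (1 <= t <= T)%N ->
     (exists2 s, S (act t) t s & Vt t = V s) \/
     ((forall s, ~~ S (act t) t s) /\ Vt t = (fun _ => 0))) ->
  enorm (p - x1) <= r ->
  (* DODA iterates with the given step sizes *)
  (forall t, (1 <= t <= T)%N ->
     x t = x1 - eta t *: \sum_(1 <= s < t | S (act t) t s) V s (xh s)) ->
  (forall t, (1 <= t <= T)%N -> xh t = x t - gamma t *: Vt t (x t)) ->
  (forall t, (1 <= t <= T)%N ->
     let D := \sum_(1 <= s < t | S (act t) t s) enorm (V s (x s) - Vt s (x s)) ^+ 2 in
     gamma t = Num.min
       (r * Num.sqrt (4 * tau%:R + 1) / (2 * Num.sqrt (D + 4 * G ^+ 2 * (tau%:R + 1))))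
       (1 / (Num.sqrt 2 * L))
     /\ eta t = Num.min
       (r / (2 * Num.sqrt ((4 * tau%:R + 1) * (D + 4 * G ^+ 2 * (3 * tau%:R + 1)))))
       (1 / (Num.sqrt 2 * L * (4 * tau%:R + 1)))) ->
  let VT := \sum_(1 <= t < T.+1) enorm (V t (x t) - Vt t (x t)) ^+ 2 in
  \sum_(1 <= t < T.+1) (f t (xh t) - f t p)
    <= Num.max (Num.sqrt 2 * r ^+ 2 * L * (4 * tau%:R + 1))
               (2 * r * Num.sqrt ((4 * tau%:R + 1) * (VT + 4 * G ^+ 2 * (3 * tau%:R + 1)))).
Proof.
move=> S_range _ _ sigma_inj S_prefix S_delay S_arrived f_convex L_gt0 V_lip V_bnd _ p_near
  x_def xh_def steps; cbv zeta.
have S_trans t s u : (1 <= t <= T)%N -> S (act t) t s -> S (act s) s u -> S (act t) t u.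
  move=> ht Sts Ssu; have [m [mT S_eq]] := S_prefix (act t) t ht.
  have /andP[s1 st] := S_range _ _ ht s Sts.
  apply: (arrived_before_prefix_closed (sigma_inj (act t)) mT S_eq Sts).
  by apply: S_arrived Ssu; lia.
apply: (@le_trans _ _ (\sum_(1 <= t < T.+1) dotv (V t (xh t)) (xh t - p))).
  by apply: ler_sum_nat => t ht; have [] := f_convex t ht; exact: convex_gradient_le.
have [G_le0|G_gt0] := lerP G 0.
  rewrite big_nat big1 ?(regret_bound_ge0 L G tau (r_ge0 p_near)) // => t ht.
  by rewrite (enorm_le0 (le_trans (V_bnd t ht _).1 G_le0)) dotv0l.
apply: (doda_linearized_regret_le (fun t => S_range (act t) t) S_delay S_trans L_gt0 V_lip V_bnd
  G_gt0 p_near) => t ht.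
- by rewrite x_def // (steps t ht).2.
- by rewrite xh_def // (steps t ht).1.
Qed.
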